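(* Let $\sigma_w^2=0$. Then $(\alpha,\sigma^2)=(1,0)$ is a fixed point of the complex SE map, i.e. $\psi_1(1,0)=1$ and $\psi_2(1,0;\delta,0)=0$ for every $\delta>0$. Moreover: (a) if $\delta>2$, there exist constants $\epsilon_1>0$, $\epsilon_2>0$ such that for every real $\alpha_0\in(1-\epsilon_1,1)$ and every $\sigma_0^2\in(0,\epsilon_2)$ the SE sequences satisfy $\alpha_t\to1$ and $\sigma_t^2\to0$; (b) if $\delta<2$, the SE sequences cannot converge to $(1,0)$ unless $(\alpha_0,\sigma_0^2)=(1,0)$.
   Context: Complex state evolution (SE). Fix $\delta>0$ and $\sigma_w^2\ge0$. For $\alpha\in\mathbb{C}$ and $\sigma^2\ge0$ with $(\alpha,\sigma^2)\neq(0,0)$, let $\theta_\alpha$ be the argument of $\alpha$ ($\theta_0:=0$) and define $$\psi_1(\alpha,\sigma^2)=e^{\mathrm{i}\theta_\alpha}\int_0^{\pi/2}\frac{|\alpha|\sin^2\theta}{(|\alpha|^2\sin^2\theta+\sigma^2)^{1/2}}\,d\theta,$$ $$\psi_2(\alpha,\sigma^2;\delta,\sigma_w^2)=\frac4\delta\Big(|\alpha|^2+\sigma^2+1-\int_0^{\pi/2}\frac{2|\alpha|^2\sin^2\theta+\sigma^2}{(|\alpha|^2\sin^2\theta+\sigma^2)^{1/2}}\,d\theta\Big)+4\sigma_w^2 .$$ Given $(\alpha_0,\sigma_0^2)$, the SE sequences are defined by $\alpha_{t+1}=\psi_1(\alpha_t,\sigma_t^2)$, $\sigma_{t+1}^2=\psi_2(\alpha_t,\sigma_t^2;\delta,\sigma_w^2)$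 for $t\ge0$. *)

From Stdlib Require Import Reals Lra ClassicalEpsilon.
Open Scope R_scope.

Definition Cpx : Type := (R * R)%type.
Definition Cmod (z : Cpx) : R := sqrt (fst z ^ 2 + snd z ^ 2).
Definition Csub (z w : Cpx) : Cpx := (fst z - fst w, snd z - snd w).
Definition Cscale (r : R) (z : Cpx) : Cpx := (r * fst z, r * snd z).
Definition Cofreal (x : R) : Cpx := (x, 0).

(* e^{i theta_alpha}: the unit complex number alpha/|alpha|, and 1 for alpha = 0
   (theta_0 := 0). *)
Definition phase (z : Cpx) : Cpx :=
  if Req_EM_T (Cmod z) 0 then (1, 0) else (fst z / Cmod z, snd z / Cmod z).

(* Riemann integral of f over [a,b] (value of RiemannInt when f is Riemann
   integrable; 0 otherwise -- never used in the relevant cases). *)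
Definition Rint (f : R -> R) (a b : R) : R :=
  match excluded_middle_informative
          (exists I, exists pr : Riemann_integrable f a b, RiemannInt pr = I) with
  | left H => proj1_sig (constructive_indefinite_description _ H)
  | right _ => 0
  end.

Definition psi1 (a : Cpx) (s2 : R) : Cpx :=
  Cscale
    (Rint (fun th => Cmod a * sin th ^ 2 / sqrt (Cmod a ^ 2 * sin th ^ 2 + s2))
          0 (PI / 2))
    (phase a).

Definition psi2 (a : Cpx) (s2 delta sw2 : R) : R :=
  4 / delta *
    (Cmod a ^ 2 + s2 + 1
     - Rint (fun th => (2 * Cmod a ^ 2 * sin th ^ 2 + s2)
                       / sqrt (Cmod a ^ 2 * sin th ^ 2 + s2))
            0 (PI / 2))
  + 4 * sw2.

Fixpoint se (delta sw2 : R) (a0 : Cpx) (s0 : R) (t : nat) : Cpx * R :=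
  match t with
  | O => (a0, s0)
  | S t' => let p := se delta sw2 a0 s0 t' in
            (psi1 (fst p) (snd p), psi2 (fst p) (snd p) delta sw2)
  end.

(** The state evolution only sees [m = |alpha|], [s = sigma^2] and the phase of
    [alpha], which it keeps.  Writing [r = s / m^2] and [rad r u = sqrt (u^2 + r)],
    both integrals are explicit perturbations of the noiseless case:
    [|psi1| = amp r] with [1 - amp r = O(r^(3/4))], and
    [psi2 = 4/delta * D m s] with [D m s = (1 - m)^2 + s/2] to first order at [(1,0)].
    For [delta > 2] the Lyapunov function [s + gam (1 - m)^2] therefore contracts
    geometrically near [(1,0)].  For [delta < 2] the variance is multiplied by a
    factor [> 1] near [(1,0)], so a sequence converging to [(1,0)] reaches
    [s = 0] after finitely many steps; since [D m s = 0] only at [(1,0)], the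
    iteration can be run backwards from there to the initial point. *)

From Stdlib Require Import Reals Lra Psatz Lia ClassicalEpsilon.
From Coquelicot Require Import Rcomplements Hierarchy RInt RInt_analysis Derive
  AutoDerive Continuity.
Open Scope R_scope.

Ltac continuous_by_derive :=
  apply (@ex_derive_continuous R_AbsRing R_NormedModule); auto_derive.

Ltac sqrt_args_pos u :=
  pose proof (pow2_ge_0 u); simpl in *;
  repeat split; try apply Rgt_not_eq; try apply sqrt_lt_R0; nra.

Lemma Rint_RInt f a b : ex_RInt f a b -> Rint f a b = RInt f a b.
Proof.
  intros Hex. unfold Rint. destruct excluded_middle_informative as [H|H].
  - destruct (constructive_indefinite_description _ H) as [I [pr HI]]; simpl.
    rewrite <- HI. symmetry; apply RInt_Reals.
  - exfalso; apply H. exists (RiemannInt (ex_RInt_Reals_0 _ _ _ Hex)).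
    exists (ex_RInt_Reals_0 _ _ _ Hex). reflexivity.
Qed.

Lemma ex_RInt_continuous_R (f : R -> R) a b :
  (forall x, continuous f x) -> ex_RInt f a b.
Proof. intros H. apply (@ex_RInt_continuous R_CompleteNormedModule). intros; apply H. Qed.

Lemma Rint_ext_RInt (f g : R -> R) a b : a <= b ->
  (forall x, a <= x <= b -> f x = g x) -> (forall x, continuous g x) ->
  Rint f a b = RInt g a b.
Proof.
  intros Hab Hfg Hg.
  assert (Hexg : ex_RInt g a b) by (apply ex_RInt_continuous_R; auto).
  assert (Hexf : ex_RInt f a b).
  { apply (ex_RInt_ext g); auto. intros x Hx.
    rewrite Rmin_left, Rmax_right in Hx by lra. symmetry; apply Hfg; lra. }
  rewrite Rint_RInt by auto. apply RInt_ext. intros x Hx.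
  rewrite Rmin_left, Rmax_right in Hx by lra. apply Hfg; lra.
Qed.

Lemma RInt_antiderivative (F f : R -> R) a b v : a <= b ->
  (forall x, a <= x <= b -> is_derive F x (f x)) ->
  (forall x, a <= x <= b -> continuous f x) -> F b - F a = v -> RInt f a b = v.
Proof.
  intros ab HF Hf <-. apply is_RInt_unique, (is_RInt_derive F f a b);
    intros x Hx; rewrite Rmin_left, Rmax_right in Hx by lra; auto.
Qed.

Lemma RInt_lin (f g : R -> R) a b c d :
  ex_RInt f a b -> ex_RInt g a b ->
  RInt (fun t => c * f t + d * g t) a b = c * RInt f a b + d * RInt g a b.
Proof.
  intros [If Hf] [Ig Hg].
  rewrite (is_RInt_unique f _ _ If Hf), (is_RInt_unique g _ _ Ig Hg).
  apply is_RInt_unique, (is_RInt_plus _ _ _ _ _ _ (is_RInt_scal _ _ _ c _ Hf)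
                                                   (is_RInt_scal _ _ _ d _ Hg)).
Qed.

Lemma PI2_ge0 : 0 <= PI / 2.
Proof. pose proof PI_RGT_0; lra. Qed.

Lemma PI_lt_347 : PI < 347 / 100.
Proof.
  destruct (PI_ineq 1) as [_ H]. unfold tg_alt, PI_tg in H. simpl in H. lra.
Qed.

Lemma sin_01 x : 0 <= x <= PI / 2 -> 0 <= sin x <= 1.
Proof. intros. pose proof PI_RGT_0. split. apply sin_ge_0; lra. apply SIN_bound. Qed.

Lemma cos_01 x : 0 <= x <= PI / 2 -> 0 <= cos x <= 1.
Proof. intros. split. apply cos_ge_0; lra. apply COS_bound. Qed.

Lemma sin_lb_poly x : sin_lb x = x - x ^ 3 / 6 + x ^ 5 / 120 - x ^ 7 / 5040.
Proof.
  unfold sin_lb, sin_approx, sin_term. cbn [sum_f_R0]. rewrite !INR_IZR_INZ.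
  vm_compute (Z.of_nat _). simpl Nat.mul. simpl Nat.add. field.
Qed.

(* Concavity of [sin] would give [2/pi * x]; [11/20] is a rational below [2/pi]. *)
Lemma sin_ge_lin x : 0 <= x <= PI / 2 -> 11 / 20 * x <= sin x.
Proof.
  intros Hx. pose proof PI_lt_347. pose proof PI_RGT_0.
  destruct (SIN x) as [Hs _]; try lra. rewrite sin_lb_poly in Hs.
  assert (0 <= x ^ 2 <= 3.03) by (split; nra).
  assert (0 <= x ^ 4 <= 9.2) by (split; nra).
  assert (x ^ 6 <= 28) by nra.
  assert (11 / 20 <= 1 - x ^ 2 / 6 + x ^ 4 / 120 - x ^ 6 / 5040) by nra.
  nra.
Qed.

Lemma continuous_sin x : continuous sin x.
Proof. continuous_by_derive. auto. Qed.

Lemma RInt_sin : RInt sin 0 (PI / 2) = 1.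
Proof.
  apply (RInt_antiderivative (fun x => - cos x)).
  - apply PI2_ge0.
  - intros x _. auto_derive; [exact I | ring].
  - intros x _. apply continuous_sin.
  - rewrite cos_PI2, cos_0. ring.
Qed.

Definition rad (r u : R) : R := sqrt (u ^ 2 + r).

(* Excess of the [psi2] integrand [(2 u^2 + r) / rad r u] over [2 u]. *)
Definition defect (r u : R) : R := (rad r u - u) ^ 2 / rad r u.

Section Radical.
Variable r : R.
Hypothesis r_pos : 0 < r.

Lemma rad_pos u : 0 < rad r u.
Proof. unfold rad. apply sqrt_lt_R0. pose proof (pow2_ge_0 u). lra. Qed.

Lemma rad_sqr u : rad r u * rad r u = u ^ 2 + r.
Proof. unfold rad. apply sqrt_sqrt. pose proof (pow2_ge_0 u). lra. Qed.

Lemma rad_ge u : 0 <= u -> u <= rad r u /\ sqrt r <= rad r u.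
Proof.
  intros Hu. pose proof (pow2_ge_0 u). unfold rad. split.
  - rewrite <- (sqrt_pow2 u Hu) at 1. apply sqrt_le_1; lra.
  - apply sqrt_le_1; lra.
Qed.

Lemma rad_sub_antitone a b : 0 <= a <= b -> rad r b - b <= rad r a - a.
Proof.
  intros Hab. destruct (rad_ge a) as [Ha _]; try lra.
  destruct (rad_ge b) as [Hb _]; try lra.
  pose proof (rad_sqr a). pose proof (rad_sqr b).
  pose proof (rad_pos a). pose proof (rad_pos b).
  set (A := rad r a) in *. set (B := rad r b) in *. simpl in *.
  assert ((B - A) * (B + A) = (b - a) * (b + a)) by nra.
  nra.
Qed.

Lemma defect_ge0 u : 0 <= defect r u.
Proof.
  unfold defect. pose proof (rad_pos u).
  apply Rdiv_le_0_compat; [apply pow2_ge_0 | lra].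
Qed.

Lemma defect_antitone a b : 0 <= a <= b -> defect r b <= defect r a.
Proof.
  intros Hab. unfold defect. pose proof (rad_sub_antitone a b Hab).
  destruct (rad_ge b) as [Hb _]; try lra.
  pose proof (rad_sqr a). pose proof (rad_sqr b). pose proof (rad_pos a).
  assert (rad r a <= rad r b) by (unfold rad; apply sqrt_le_1; simpl; nra).
  set (A := rad r a) in *. set (B := rad r b) in *.
  apply Rle_trans with ((A - a) ^ 2 / B).
  - unfold Rdiv. apply Rmult_le_compat_r. left; apply Rinv_0_lt_compat; lra.
    simpl; nra.
  - unfold Rdiv. apply Rmult_le_compat_l. apply pow2_ge_0.
    apply Rinv_le_contravar; lra.
Qed.

(* From [u (rad - u) (rad + u) = r u] one gets [u (rad - u) <= r / 2]. *)
Lemma defect_mul_sqr_le u : 0 <= u -> defect r u * u ^ 2 <= r * sqrt r / 4.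
Proof.
  intros Hu. unfold defect.
  destruct (rad_ge u Hu) as [H1 H2].
  pose proof (rad_sqr u). pose proof (rad_pos u).
  pose proof (sqrt_lt_R0 r r_pos) as Hq0.
  pose proof (sqrt_sqrt r (Rlt_le _ _ r_pos)) as Hqq.
  set (S := rad r u) in *. set (q := sqrt r) in *.
  assert (Hk : u * (S - u) * (S + u) = r * u) by (simpl in *; nra).
  assert (u * (S - u) <= r / 2).
  { assert (u * (S - u) * (S + u) <= r / 2 * (S + u)) by nra.
    apply Rmult_le_reg_r with (S + u); lra. }
  assert (0 <= u * (S - u)) by nra.
  assert ((u * (S - u)) ^ 2 <= r * r / 4) by nra.
  replace ((S - u) ^ 2 / S * u ^ 2) with ((u * (S - u)) ^ 2 / S) by (field; lra).
  replace (r * q / 4) with (r * (q * q) / 4 / q) by (field; lra). rewrite Hqq.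
  apply Rle_trans with (r * r / 4 / S).
  - unfold Rdiv. apply Rmult_le_compat_r. left; apply Rinv_0_lt_compat; lra. lra.
  - unfold Rdiv. apply Rmult_le_compat_l. nra. apply Rinv_le_contravar; lra.
Qed.

Lemma quad_div_rad u : (2 * u ^ 2 + r) / rad r u = 2 * u + defect r u.
Proof.
  unfold defect. pose proof (rad_sqr u). pose proof (rad_pos u).
  set (S := rad r u) in *.
  assert (E : 2 * u ^ 2 + r = 2 * u * S + (S - u) ^ 2) by (simpl in *; nra).
  rewrite E. field. lra.
Qed.

Lemma sub_sqr_div_rad_bounds u : 0 <= u ->
  0 <= u - u ^ 2 / rad r u <= r * u / (u ^ 2 + r).
Proof.
  intros Hu. destruct (rad_ge u Hu) as [H1 H2].
  pose proof (rad_sqr u). pose proof (rad_pos u).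
  set (S := rad r u) in *.
  assert (Hx : u - u ^ 2 / S = u * (S - u) / S) by (field; lra).
  rewrite Hx, <- H. split.
  - apply Rdiv_le_0_compat; nra.
  - assert (Hr' : r = (S - u) * (S + u)) by (simpl in *; nra).
    replace (u * (S - u) / S) with (u * (S - u) * S / (S * S)) by (field; lra).
    unfold Rdiv. apply Rmult_le_compat_r. left; apply Rinv_0_lt_compat; nra.
    rewrite Hr'. nra.
Qed.

Lemma continuous_defect_sin x : continuous (fun t => defect r (sin t)) x.
Proof. unfold defect, rad. continuous_by_derive. sqrt_args_pos (sin x). Qed.

Lemma continuous_sqr_div_rad_sin x :
  continuous (fun t => sin t ^ 2 / rad r (sin t)) x.
Proof. unfold rad. continuous_by_derive. sqrt_args_pos (sin x). Qed.

Lemma sqrt_1_plus_gt1 : 1 < sqrt (1 + r).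
Proof. rewrite <- sqrt_1 at 1. apply sqrt_lt_1; lra. Qed.

Lemma sqrt_1_plus_sqr : sqrt (1 + r) * sqrt (1 + r) = 1 + r.
Proof. apply sqrt_sqrt; lra. Qed.

Lemma RInt_defect_sin_cos :
  RInt (fun t => defect r (sin t) * cos t) 0 (PI / 2) = sqrt (1 + r) - 1.
Proof.
  apply (RInt_antiderivative (fun t => - (rad r (sin t) - sin t) ^ 2 / 2)).
  - apply PI2_ge0.
  - intros x _. unfold defect, rad. auto_derive.
    + pose proof (pow2_ge_0 (sin x)). simpl in *; nra.
    + replace (sin x * (sin x * 1)) with (sin x ^ 2) by ring. fold (rad r (sin x)).
      pose proof (rad_pos (sin x)). pose proof (rad_sqr (sin x)).
      set (S := rad r (sin x)) in *. field. lra.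
  - intros x _. unfold defect, rad. continuous_by_derive. sqrt_args_pos (sin x).
  - rewrite sin_PI2, sin_0. unfold rad.
    replace (1 ^ 2 + r) with (1 + r) by ring. replace (0 ^ 2 + r) with r by ring.
    pose proof sqrt_1_plus_sqr. pose proof (sqrt_sqrt r (Rlt_le _ _ r_pos)).
    replace ((sqrt r - 0) ^ 2) with (sqrt r * sqrt r) by ring. simpl. nra.
Qed.

Lemma RInt_defect_lin :
  RInt (fun t => defect r (11 / 20 * t)) 0 (PI / 2) =
  20 / 11 * (r / 2 - (rad r (11 / 20 * (PI / 2)) - 11 / 20 * (PI / 2)) ^ 2 / 2).
Proof.
  apply (RInt_antiderivative
           (fun t => - (20 / 11) * (rad r (11 / 20 * t) - 11 / 20 * t) ^ 2 / 2)).
  - apply PI2_ge0.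
  - intros x _. unfold defect, rad. auto_derive.
    + pose proof (pow2_ge_0 (11 / 20 * x)). simpl in *; nra.
    + set (u := 11 / 20 * x). replace (u * (u * 1)) with (u ^ 2) by ring.
      fold (rad r u). pose proof (rad_pos u). pose proof (rad_sqr u).
      set (S := rad r u) in *. field. lra.
  - intros x _. unfold defect, rad. continuous_by_derive.
    sqrt_args_pos (11 / 20 * x).
  - replace (11 / 20 * 0) with 0 by ring. unfold rad at 2.
    replace (0 ^ 2 + r) with r by ring.
    pose proof (sqrt_sqrt r (Rlt_le _ _ r_pos)).
    replace ((sqrt r - 0) ^ 2) with (sqrt r * sqrt r) by ring. rewrite H. field.
Qed.

Lemma RInt_log_kernel :
  RInt (fun t => r * sin t / (sin t ^ 2 + r)) 0 (PI / 2)
  = r * (ln (sqrt (1 + r) + 1) - ln (sqrt (1 + r) - 1)) / (2 * sqrt (1 + r)).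
Proof.
  pose proof sqrt_1_plus_gt1 as Hc. pose proof sqrt_1_plus_sqr as Hc2.
  set (c := sqrt (1 + r)) in *.
  assert (Hcos : forall t, -1 <= cos t <= 1) by apply COS_bound.
  assert (Hs : forall t, sin t ^ 2 + r = (c - cos t) * (c + cos t)).
  { intros t. pose proof (sin2_cos2 t). unfold Rsqr in *. simpl. nra. }
  apply (RInt_antiderivative (fun t => r * (ln (c - cos t) - ln (c + cos t)) / (2 * c))).
  - apply PI2_ge0.
  - intros x _. specialize (Hcos x). auto_derive.
    + split; [lra | split; [lra | auto]].
    + rewrite (Hs x). field. repeat split; lra.
  - intros x _. continuous_by_derive. sqrt_args_pos (sin x).
  - rewrite cos_PI2, cos_0. replace (c - 0) with (c + 0) by ring. field. lra.
Qed.

End Radical.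

Lemma RInt_le_PI2 (f g : R -> R) :
  (forall x, continuous f x) -> (forall x, continuous g x) ->
  (forall x, 0 <= x <= PI / 2 -> f x <= g x) -> RInt f 0 (PI / 2) <= RInt g 0 (PI / 2).
Proof.
  intros Hf Hg Hfg. apply RInt_le; try apply ex_RInt_continuous_R; auto.
  apply PI2_ge0. intros; apply Hfg; lra.
Qed.

Lemma RInt_const_PI2 k : RInt (fun _ => k) 0 (PI / 2) = PI / 2 * k.
Proof. rewrite RInt_const. unfold scal; simpl; unfold mult; simpl. ring. Qed.

Definition defect_int (r : R) : R := RInt (fun t => defect r (sin t)) 0 (PI / 2).

Definition amp (r : R) : R := RInt (fun t => sin t ^ 2 / rad r (sin t)) 0 (PI / 2).

Definition log_gap (r : R) : R :=
  r * (ln (sqrt (1 + r) + 1) - ln (sqrt (1 + r) - 1)) / (2 * sqrt (1 + r)).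

Section DefectIntegral.
Variable r : R.
Hypothesis r_pos : 0 < r.

Lemma continuous_defect_sin_cos x : continuous (fun t => defect r (sin t) * cos t) x.
Proof. unfold defect, rad. continuous_by_derive. sqrt_args_pos (sin x). Qed.

(* Compare with the exact integral of [defect r (sin t) * cos t], using [cos <= 1]
   below and [1 - cos <= sin^2] above. *)
Lemma defect_int_ge : sqrt (1 + r) - 1 <= defect_int r.
Proof.
  rewrite <- RInt_defect_sin_cos by auto. unfold defect_int.
  apply RInt_le_PI2; auto using continuous_defect_sin_cos, continuous_defect_sin.
  intros x Hx. pose proof (cos_01 x Hx). pose proof (defect_ge0 r r_pos (sin x)). nra.
Qed.

Lemma defect_int_le_cubic :
  defect_int r <= sqrt (1 + r) - 1 + PI / 2 * (r * sqrt r / 4).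
Proof.
  set (k := r * sqrt r / 4).
  apply Rle_trans with
    (RInt (fun t => 1 * (defect r (sin t) * cos t) + k * 1) 0 (PI / 2)).
  - apply RInt_le_PI2; auto using continuous_defect_sin.
    + intros x. unfold defect, rad. continuous_by_derive. sqrt_args_pos (sin x).
    + intros x Hx. pose proof (cos_01 x Hx). pose proof (sin_01 x Hx).
      pose proof (defect_ge0 r r_pos (sin x)).
      pose proof (defect_mul_sqr_le r r_pos (sin x) ltac:(lra)).
      pose proof (sin2_cos2 x). unfold Rsqr in *.
      assert (1 - cos x <= sin x ^ 2) by (simpl; nra).
      assert (defect r (sin x) * (1 - cos x) <= defect r (sin x) * sin x ^ 2) by nra.
      unfold k. nra.
  - rewrite RInt_lin, RInt_defect_sin_cos, RInt_const_PI2 by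
      auto using ex_RInt_const, ex_RInt_continuous_R, continuous_defect_sin_cos.
    simpl; lra.
Qed.

(* Uses [sin t >= 11/20 t] and the antitonicity of [defect r]. *)
Lemma defect_int_le_lin : defect_int r <= 20 / 11 * (sqrt (1 + r) - 1).
Proof.
  pose proof PI_lt_347. pose proof PI_RGT_0.
  apply Rle_trans with (RInt (fun t => defect r (11 / 20 * t)) 0 (PI / 2)).
  { apply RInt_le_PI2; auto using continuous_defect_sin.
    - intros x. unfold defect, rad. continuous_by_derive. sqrt_args_pos (11 / 20 * x).
    - intros x Hx. apply defect_antitone; auto. pose proof (sin_ge_lin x Hx). lra. }
  rewrite RInt_defect_lin by auto.
  destruct (rad_ge r r_pos 1) as [Hs1 _]; try lra.
  assert (Ha : rad r 1 - 1 <= rad r (11 / 20 * (PI / 2)) - 11 / 20 * (PI / 2))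
    by (apply rad_sub_antitone; lra).
  assert (Hc : rad r 1 = sqrt (1 + r)) by (unfold rad; f_equal; ring).
  pose proof (sqrt_1_plus_sqr r).
  rewrite Hc in Ha, Hs1. simpl in *. nra.
Qed.

Lemma amp_bounds : 1 - log_gap r <= amp r <= 1.
Proof.
  assert (Hc : forall x, continuous (fun t => sin t - sin t ^ 2 / rad r (sin t)) x).
  { intros x. unfold rad. continuous_by_derive. sqrt_args_pos (sin x). }
  assert (E : amp r = RInt sin 0 (PI / 2)
                      - RInt (fun t => sin t - sin t ^ 2 / rad r (sin t)) 0 (PI / 2)).
  { unfold amp. rewrite (RInt_minus sin (fun t => sin t ^ 2 / rad r (sin t)));
      try apply ex_RInt_continuous_R; auto using continuous_sin, continuous_sqr_div_rad_sin.
    unfold minus, plus, opp; simpl. lra. }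
  rewrite E, RInt_sin. split.
  - unfold log_gap. rewrite <- RInt_log_kernel by auto.
    enough (RInt (fun t => sin t - sin t ^ 2 / rad r (sin t)) 0 (PI / 2) <=
            RInt (fun t => r * sin t / (sin t ^ 2 + r)) 0 (PI / 2)) by lra.
    apply RInt_le_PI2; auto.
    + intros x. continuous_by_derive. sqrt_args_pos (sin x).
    + intros x Hx. pose proof (sin_01 x Hx). apply sub_sqr_div_rad_bounds; auto; lra.
  - enough (0 <= RInt (fun t => sin t - sin t ^ 2 / rad r (sin t)) 0 (PI / 2)) by lra.
    apply RInt_ge_0; [apply PI2_ge0 | apply ex_RInt_continuous_R; auto |].
    intros x Hx. pose proof (sin_01 x ltac:(lra)). apply sub_sqr_div_rad_bounds; auto; lra.
Qed.

End DefectIntegral.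

Lemma ln_le_sub1 w : 0 < w -> ln w <= w - 1.
Proof.
  intros Hw. destruct (Req_dec (w - 1) 0) as [E|E].
  - replace w with 1 by lra. rewrite ln_1. lra.
  - pose proof (exp_ineq1 _ E). rewrite <- (exp_ln w Hw) in H at 1.
    left. apply exp_lt_inv. lra.
Qed.

(* Apply [ln w <= w - 1] to [w = y^(1/4)]. *)
Lemma ln_sqr_le_sqrt y : 1 <= y -> ln y ^ 2 <= 16 * sqrt y.
Proof.
  intros Hy.
  assert (Hsy : 0 < sqrt y) by (apply sqrt_lt_R0; lra).
  set (w := sqrt (sqrt y)).
  assert (Hw : 0 < w) by (apply sqrt_lt_R0; lra).
  assert (Hww : w * w = sqrt y) by (apply sqrt_sqrt; lra).
  assert (Hyy : sqrt y * sqrt y = y) by (apply sqrt_sqrt; lra).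
  assert (HLw : ln y = 4 * ln w).
  { rewrite <- Hyy, <- Hww. rewrite !ln_mult; try lra; try nra. }
  assert (HL0 : 0 <= ln y) by (rewrite <- ln_1; apply ln_le; lra).
  pose proof (ln_le_sub1 w Hw).
  simpl; nra.
Qed.

Lemma log_gap_bound r : 0 < r <= 3 -> 0 <= log_gap r /\ log_gap r ^ 2 <= 12 * r * sqrt r.
Proof.
  intros Hr. unfold log_gap.
  pose proof (sqrt_1_plus_gt1 r ltac:(lra)) as Hc1.
  pose proof (sqrt_1_plus_sqr r ltac:(lra)) as Hc2.
  set (c := sqrt (1 + r)) in *.
  assert (Hc3 : c <= 2) by nra.
  set (y := (c + 1) / (c - 1)).
  assert (Hy1 : 1 < y).
  { unfold y. apply (Rmult_lt_reg_r (c - 1)); try lra.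
    unfold Rdiv. rewrite Rmult_assoc, Rinv_l; lra. }
  assert (EL : ln (c + 1) - ln (c - 1) = ln y).
  { unfold y, Rdiv. rewrite ln_mult, ln_Rinv; try lra. apply Rinv_0_lt_compat; lra. }
  rewrite EL.
  assert (HL0 : 0 <= ln y) by (rewrite <- ln_1; left; apply ln_increasing; lra).
  assert (Hry : r * y = (c + 1) ^ 2).
  { unfold y. replace r with ((c - 1) * (c + 1)) at 1 by nra. field. lra. }
  assert (HL2 := ln_sqr_le_sqrt y ltac:(lra)).
  assert (Hsy : 0 < sqrt y) by (apply sqrt_lt_R0; lra).
  assert (Hyy : sqrt y * sqrt y = y) by (apply sqrt_sqrt; lra).
  pose proof (sqrt_lt_R0 r ltac:(lra)) as Hsr.
  pose proof (sqrt_sqrt r ltac:(lra)) as Hrr.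
  assert (Hrsy : r * sqrt y <= 3 * sqrt r).
  { assert ((r * sqrt y) * (r * sqrt y) <= (3 * sqrt r) * (3 * sqrt r)).
    { replace ((r * sqrt y) * (r * sqrt y)) with (r * (r * (sqrt y * sqrt y))) by ring.
      replace ((3 * sqrt r) * (3 * sqrt r)) with (9 * (sqrt r * sqrt r)) by ring.
      rewrite Hyy, Hrr, Hry. simpl. nra. }
    nra. }
  split.
  - apply Rdiv_le_0_compat; nra.
  - assert (E : (r * ln y / (2 * c)) ^ 2 = r ^ 2 * ln y ^ 2 / (4 * c ^ 2)) by (field; lra).
    rewrite E. apply Rle_trans with (r ^ 2 * ln y ^ 2 / 4).
    + unfold Rdiv. apply Rmult_le_compat_l. nra.
      apply Rinv_le_contravar; simpl; nra.
    + assert (r ^ 2 * ln y ^ 2 <= r ^ 2 * (16 * sqrt y)) by (apply Rmult_le_compat_l; nra).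
      simpl in *. nra.
Qed.

Definition psi1_mod (m s : R) : R :=
  Rint (fun th => m * sin th ^ 2 / sqrt (m ^ 2 * sin th ^ 2 + s)) 0 (PI / 2).

Definition psi2_int (m s : R) : R :=
  Rint (fun th => (2 * m ^ 2 * sin th ^ 2 + s) / sqrt (m ^ 2 * sin th ^ 2 + s)) 0 (PI / 2).

Definition psi2_core (m s : R) : R := m ^ 2 + s + 1 - psi2_int m s.

Lemma psi1_eq a s : psi1 a s = Cscale (psi1_mod (Cmod a) s) (phase a).
Proof. reflexivity. Qed.

Lemma psi2_noiseless a s delta : psi2 a s delta 0 = 4 / delta * psi2_core (Cmod a) s.
Proof. unfold psi2, psi2_core, psi2_int. ring. Qed.

Lemma sqrt_scale m s u : 0 < m -> 0 < s -> sqrt (m ^ 2 * u ^ 2 + s) = m * rad (s / m ^ 2) u.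
Proof.
  intros Hm Hs. unfold rad.
  assert (0 < s / m ^ 2) by (apply Rdiv_lt_0_compat; nra).
  pose proof (pow2_ge_0 u).
  replace (m ^ 2 * u ^ 2 + s) with (m ^ 2 * (u ^ 2 + s / m ^ 2)) by (field; lra).
  rewrite sqrt_mult, sqrt_pow2 by (try apply pow2_ge_0; lra). reflexivity.
Qed.

Lemma sqrt_noiseless m x : 0 <= m -> 0 <= x <= PI / 2 ->
  sqrt (m ^ 2 * sin x ^ 2 + 0) = m * sin x.
Proof.
  intros Hm Hx. destruct (sin_01 x Hx).
  replace (m ^ 2 * sin x ^ 2 + 0) with ((m * sin x) ^ 2) by ring.
  apply sqrt_pow2. nra.
Qed.

Lemma psi1_mod_noiseless m : 0 < m -> psi1_mod m 0 = 1.
Proof.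
  intros Hm. unfold psi1_mod. rewrite <- RInt_sin.
  apply Rint_ext_RInt; auto using PI2_ge0, continuous_sin.
  intros x Hx. rewrite sqrt_noiseless by lra. destruct (Req_dec (sin x) 0) as [E|E].
  - rewrite E. unfold Rdiv. simpl. ring.
  - field. split; lra.
Qed.

Lemma psi2_int_noiseless m : 0 < m -> psi2_int m 0 = 2 * m.
Proof.
  intros Hm. unfold psi2_int.
  rewrite (Rint_ext_RInt _ (fun t => (2 * m) * sin t + 0 * sin t));
    auto using PI2_ge0.
  - rewrite RInt_lin by (apply ex_RInt_continuous_R, continuous_sin).
    rewrite RInt_sin. ring.
  - intros x Hx. rewrite sqrt_noiseless by lra. destruct (Req_dec (sin x) 0) as [E|E].
    + rewrite E. unfold Rdiv. simpl. ring.
    + field. split; lra.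
  - intros x. continuous_by_derive. auto.
Qed.

Lemma psi2_int_zero_mod s : 0 <= s -> psi2_int 0 s = PI / 2 * sqrt s.
Proof.
  intros Hs. unfold psi2_int. rewrite <- RInt_const_PI2.
  apply Rint_ext_RInt; auto using PI2_ge0, continuous_const.
  intros x _. replace (2 * 0 ^ 2 * sin x ^ 2 + s) with s by ring.
  replace (0 ^ 2 * sin x ^ 2 + s) with s by ring.
  destruct (Req_dec s 0) as [E|E].
  - subst. rewrite sqrt_0. unfold Rdiv. ring.
  - pose proof (sqrt_lt_R0 s ltac:(lra)). pose proof (sqrt_sqrt s Hs).
    rewrite <- H0 at 1. field. lra.
Qed.

Lemma psi1_mod_amp m s : 0 < m -> 0 < s -> psi1_mod m s = amp (s / m ^ 2).
Proof.
  intros Hm Hs. unfold psi1_mod, amp.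
  assert (Hr : 0 < s / m ^ 2) by (apply Rdiv_lt_0_compat; nra).
  apply Rint_ext_RInt; auto using PI2_ge0, continuous_sqr_div_rad_sin.
  intros x _. rewrite sqrt_scale by auto. pose proof (rad_pos _ Hr (sin x)). field. lra.
Qed.

Lemma psi2_int_defect m s : 0 < m -> 0 < s ->
  psi2_int m s = m * (2 + defect_int (s / m ^ 2)).
Proof.
  intros Hm Hs. unfold psi2_int, defect_int.
  assert (Hr : 0 < s / m ^ 2) by (apply Rdiv_lt_0_compat; nra).
  rewrite (Rint_ext_RInt _ (fun t => (2 * m) * sin t + m * defect (s / m ^ 2) (sin t)));
    auto using PI2_ge0.
  - rewrite RInt_lin
      by (apply ex_RInt_continuous_R; auto using continuous_sin, continuous_defect_sin).
    rewrite RInt_sin. ring.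
  - intros x _. rewrite sqrt_scale by auto.
    pose proof (rad_pos _ Hr (sin x)).
    transitivity (m * ((2 * sin x ^ 2 + s / m ^ 2) / rad (s / m ^ 2) (sin x))).
    + field. lra.
    + rewrite quad_div_rad by auto. ring.
  - intros x. unfold defect, rad. continuous_by_derive. sqrt_args_pos (sin x).
Qed.

Lemma psi2_core_noiseless m : 0 < m -> psi2_core m 0 = (1 - m) ^ 2.
Proof. intros Hm. unfold psi2_core. rewrite psi2_int_noiseless by auto. ring. Qed.

(* [q^2 - pi/2 q + 1 = (q - 1)^2 + (2 - pi/2) q] with [q = sqrt s]. *)
Lemma psi2_core_zero_mod_pos s : 0 <= s -> 0 < psi2_core 0 s.
Proof.
  intros Hs. unfold psi2_core. rewrite psi2_int_zero_mod by auto.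
  pose proof PI_lt_347. pose proof (sqrt_pos s). pose proof (sqrt_sqrt s Hs).
  set (q := sqrt s) in *. rewrite <- H1.
  assert (0 <= q * (2 - PI / 2)) by (apply Rmult_le_pos; lra).
  pose proof (Rle_0_sqr (q - 1)). unfold Rsqr in *. simpl. nra.
Qed.

(* Writing [c = sqrt (1 + r)], [s = m^2 r]:
   [psi2_core m s >= (m c - 1)^2 + (2 - 20/11) m (c - 1)]. *)
Lemma psi2_core_pos m s : 0 < m -> 0 < s -> 0 < psi2_core m s.
Proof.
  intros Hm Hs. unfold psi2_core. rewrite psi2_int_defect by auto.
  assert (Hr : 0 < s / m ^ 2) by (apply Rdiv_lt_0_compat; nra).
  pose proof (defect_int_le_lin _ Hr).
  pose proof (sqrt_1_plus_gt1 _ Hr). pose proof (sqrt_1_plus_sqr _ Hr).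
  set (r := s / m ^ 2) in *. set (c := sqrt (1 + r)) in *.
  assert (Hsr : s = m ^ 2 * r) by (unfold r; field; lra).
  assert (0 < m * (c - 1) * (2 - 20 / 11)) by nra.
  pose proof (pow2_ge_0 (m * c - 1)).
  rewrite Hsr. simpl in *. nra.
Qed.

Lemma psi2_core_gt0 m s : 0 <= m -> 0 <= s -> (m, s) <> (1, 0) -> 0 < psi2_core m s.
Proof.
  intros Hm Hs Hne. destruct (Req_dec m 0) as [->|Hm0].
  { now apply psi2_core_zero_mod_pos. }
  destruct (Req_dec s 0) as [->|Hs0].
  - rewrite psi2_core_noiseless by lra.
    assert (1 - m <> 0) by (intros E; apply Hne; f_equal; lra).
    pose proof (Rsqr_pos_lt _ H). unfold Rsqr in *. simpl; lra.
  - apply psi2_core_pos; lra.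
Qed.

Lemma psi2_core_nonneg m s : 0 <= m -> 0 <= s -> 0 <= psi2_core m s.
Proof.
  intros Hm Hs. destruct (Req_dec m 1) as [->|Hm1]; [destruct (Req_dec s 0) as [->|Hs0]|].
  - rewrite psi2_core_noiseless by lra. lra.
  - left. apply psi2_core_gt0; auto. congruence.
  - left. apply psi2_core_gt0; auto. congruence.
Qed.

Lemma psi2_core_eq0 m s : 0 <= m -> 0 <= s -> psi2_core m s = 0 -> m = 1 /\ s = 0.
Proof.
  intros Hm Hs H0. destruct (Req_dec m 1) as [->|Hm1]; [destruct (Req_dec s 0) as [->|Hs0]|].
  - auto.
  - exfalso. assert (0 < psi2_core 1 s) by (apply psi2_core_gt0; auto; congruence). lra.
  - exfalso. assert (0 < psi2_core m s) by (apply psi2_core_gt0; auto; congruence). lra.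
Qed.

(* Near [(1,0)] the core is at least [(1/2 - q) s]: use [c - 1 <= r/2] and the
   cubic bound on [defect_int]. *)
Lemma psi2_core_gt_lower m s q : 0 < q <= 1 / 2 -> 1 - q / 2 < m -> 0 < s < q ^ 2 / 2 ->
  psi2_core m s > (1 / 2 - q) * s.
Proof.
  intros Hq Hm Hs. unfold psi2_core. pose proof PI_lt_347. pose proof PI_RGT_0.
  rewrite psi2_int_defect by lra.
  assert (Hr : 0 < s / m ^ 2) by (apply Rdiv_lt_0_compat; nra).
  pose proof (defect_int_le_cubic _ Hr).
  pose proof (sqrt_1_plus_gt1 _ Hr). pose proof (sqrt_1_plus_sqr _ Hr).
  set (r := s / m ^ 2) in *. set (c := sqrt (1 + r)) in *.
  assert (Hsr : s = m ^ 2 * r) by (unfold r; field; lra).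
  assert (Hc : c - 1 <= r / 2) by nra.
  pose proof (sqrt_lt_R0 r Hr). pose proof (sqrt_sqrt r (Rlt_le _ _ Hr)).
  assert (Hrq : r < q ^ 2).
  { assert (m ^ 2 > 1 / 2) by nra.
    assert (r * m ^ 2 < q ^ 2 / 2) by (rewrite Rmult_comm, <- Hsr; lra). nra. }
  assert (Hsq : sqrt r < q).
  { apply Rnot_le_lt. intros Hle. assert (q * q <= sqrt r * sqrt r) by nra.
    simpl in *; nra. }
  assert (defect_int r < r / 2 + q * r / 2).
  { assert (r * sqrt r < r * q) by nra.
    assert (0 < r * sqrt r) by (apply Rmult_lt_0_compat; lra).
    assert (PI * (r * sqrt r) < 4 * (r * sqrt r)) by (apply Rmult_lt_compat_r; lra).
    lra. }
  rewrite Hsr. simpl in *.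
  assert (m * (1 / 2 + q) >= (1 + q) / 2) by nra.
  assert (m * defect_int r < m * (r / 2 + q * r / 2)) by (apply Rmult_lt_compat_l; lra).
  assert (0 <= (m * r) * (m * (1 / 2 + q) - (1 + q) / 2)) by (apply Rmult_le_pos; nra).
  pose proof (Rle_0_sqr (m - 1)). unfold Rsqr in *. nra.
Qed.

(* From [defect_int r >= c - 1] and [m (c - 1) >= s / (c + 1) >= s (1/2 - r/8)]. *)
Lemma psi2_core_le_upper m s : 0 < m <= 1 -> 0 < s ->
  psi2_core m s <= (1 - m) ^ 2 + s * (1 / 2 + s / m ^ 2 / 8).
Proof.
  intros Hm Hs. unfold psi2_core. rewrite psi2_int_defect by lra.
  assert (Hr : 0 < s / m ^ 2) by (apply Rdiv_lt_0_compat; nra).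
  pose proof (defect_int_ge _ Hr).
  pose proof (sqrt_1_plus_gt1 _ Hr). pose proof (sqrt_1_plus_sqr _ Hr).
  set (r := s / m ^ 2) in *. set (c := sqrt (1 + r)) in *.
  assert (Hsr : s = m ^ 2 * r) by (unfold r; field; lra).
  assert (Hc' : c - 1 = r / (c + 1)) by (replace r with (c * c - 1) by lra; field; lra).
  assert (m * (c - 1) >= s / (c + 1)).
  { rewrite Hc', Hsr. unfold Rdiv.
    assert (m * r >= m ^ 2 * r) by (simpl; nra).
    apply Rle_ge. rewrite <- Rmult_assoc. apply Rmult_le_compat_r.
    left; apply Rinv_0_lt_compat; lra. lra. }
  assert (s / (c + 1) >= s * (1 / 2 - r / 8)).
  { unfold Rdiv. apply Rle_ge. apply Rmult_le_compat_l. lra.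
    apply Rmult_le_reg_r with (c + 1). lra. rewrite Rinv_l by lra. nra. }
  assert (m ^ 2 + s + 1 - m * (2 + defect_int r) <= (1 - m) ^ 2 + s - m * (c - 1))
    by nra.
  lra.
Qed.

Lemma Cmod_nonneg z : 0 <= Cmod z.
Proof. apply sqrt_pos. Qed.

Lemma Cmod_real m : 0 <= m -> Cmod (m, 0) = m.
Proof.
  intros. unfold Cmod; simpl. replace (m * (m * 1) + 0 * (0 * 1)) with (m ^ 2) by ring.
  apply sqrt_pow2; auto.
Qed.

Lemma Cmod_sub_real m : Cmod (Csub (m, 0) (1, 0)) = Rabs (m - 1).
Proof.
  unfold Cmod, Csub; cbn [fst snd].
  replace ((m - 1) ^ 2 + (0 - 0) ^ 2) with (Rsqr (m - 1)) by (unfold Rsqr; ring).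
  apply sqrt_Rsqr_abs.
Qed.

Lemma Cmod_sub_ge z : Rabs (Cmod z - 1) <= Cmod (Csub z (1, 0)).
Proof.
  destruct z as [x y]. unfold Cmod, Csub; cbn [fst snd].
  pose proof (pow2_ge_0 x); pose proof (pow2_ge_0 y).
  pose proof (sqrt_pos (x ^ 2 + y ^ 2)).
  assert (Hq : sqrt (x ^ 2 + y ^ 2) * sqrt (x ^ 2 + y ^ 2) = x ^ 2 + y ^ 2)
    by (apply sqrt_sqrt; lra).
  set (M := sqrt (x ^ 2 + y ^ 2)) in *.
  assert (HxM : x <= M) by (simpl in *; nra).
  rewrite <- sqrt_Rsqr_abs. apply sqrt_le_1_alt. unfold Rsqr. simpl in *. nra.
Qed.

Lemma Cmod_eq0 z : Cmod z = 0 -> z = (0, 0).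
Proof.
  destruct z as [x y]. unfold Cmod; simpl. intros H.
  pose proof (pow2_ge_0 x); pose proof (pow2_ge_0 y).
  apply sqrt_eq_0 in H; [|lra]. f_equal; simpl in *; nra.
Qed.

Lemma phase_real m : 0 < m -> phase (m, 0) = (1, 0).
Proof.
  intros Hm. unfold phase. rewrite Cmod_real by lra.
  destruct (Req_EM_T m 0). lra. simpl. f_equal; field; lra.
Qed.

Lemma phase_unit z : Cmod z = 1 -> phase z = z.
Proof.
  intros H. unfold phase. rewrite H. destruct (Req_EM_T 1 0). lra.
  destruct z; simpl. f_equal; field.
Qed.

Lemma psi1_noiseless_unit a : Cmod a = 1 -> psi1 a 0 = a.
Proof.
  intros H. rewrite psi1_eq, H, psi1_mod_noiseless, phase_unit by (auto; lra).
  destruct a; unfold Cscale; simpl; f_equal; ring.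
Qed.

Lemma Un_cv_eventually_lt (u : nat -> R) e :
  Un_cv u 0 -> 0 < e -> exists N, forall n, (n >= N)%nat -> u n < e.
Proof.
  intros Hu He. destruct (Hu e He) as [N HN]. exists N. intros n Hn.
  specialize (HN n Hn). unfold R_dist in HN. rewrite Rminus_0_r in HN.
  apply Rabs_def2 in HN. lra.
Qed.

Lemma Un_cv_const_tail (u : nat -> R) l c N :
  (forall n, (n >= N)%nat -> u n = c) -> Un_cv u l -> c = l.
Proof.
  intros Hc Hu. destruct (Req_dec c l) as [|Hne]; auto. exfalso.
  assert (He : 0 < Rabs (c - l)) by (apply Rabs_pos_lt; lra).
  destruct (Hu _ He) as [N' HN']. specialize (HN' (N + N')%nat ltac:(lia)).
  unfold R_dist in HN'. rewrite Hc in HN' by lia. lra.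
Qed.

Lemma Un_cv_0_nondecreasing_le0 (u : nat -> R) N :
  (forall n, (n >= N)%nat -> u n <= u (S n)) -> Un_cv u 0 ->
  forall n, (n >= N)%nat -> u n <= 0.
Proof.
  intros Hmono Hu n Hn. apply Rnot_lt_le. intros Hpos.
  assert (Hgrow : forall k, u n <= u (n + k)%nat).
  { induction k as [|k IH]; [rewrite Nat.add_0_r; lra|].
    rewrite Nat.add_succ_r. specialize (Hmono (n + k)%nat ltac:(lia)). lra. }
  destruct (Un_cv_eventually_lt u (u n) Hu Hpos) as [N' HN'].
  specialize (HN' (n + N')%nat ltac:(lia)). specialize (Hgrow N'). lra.
Qed.

Lemma geometric_eventually_lt q V e : 0 <= q < 1 -> 0 < V -> 0 < e ->
  exists N, forall n, (n >= N)%nat -> q ^ n * V < e.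
Proof.
  intros Hq HV He.
  destruct (pow_lt_1_zero q ltac:(rewrite Rabs_pos_eq; lra) (e / V)
              ltac:(apply Rdiv_lt_0_compat; lra)) as [N HN].
  exists N. intros n Hn. specialize (HN n Hn).
  rewrite Rabs_pos_eq in HN by (apply pow_le; lra).
  apply Rmult_lt_compat_r with (r := V) in HN; [|lra].
  replace (e / V * V) with e in HN by (field; lra). exact HN.
Qed.

Section Contraction.
Variable delta : R.
Hypothesis delta_gt_2 : 2 < delta.

(* [4/delta * (1/2 + r/8) <= noise_rate] as soon as [r <= (delta - 2)/2]. *)
Definition noise_rate : R := (delta + 6) / (4 * delta).
Definition contraction : R := (1 + noise_rate) / 2.
(* Chosen so that [4/delta = contraction * lyap_weight]. *)
Definition lyap_weight : R := 4 / (delta * contraction).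
Definition amp_tol : R := (contraction - noise_rate) / (4 * lyap_weight).
Definition r_small : R :=
  Rmin (Rmin ((delta - 2) / 2) (1 / 4)) ((Rmin amp_tol 1 / 12) ^ 2).

Lemma noise_rate_bounds : 0 < noise_rate < 1.
Proof.
  unfold noise_rate. split; [apply Rdiv_lt_0_compat; lra|].
  apply Rmult_lt_reg_r with (4 * delta); [lra|].
  unfold Rdiv. rewrite Rmult_assoc, Rinv_l; lra.
Qed.

Lemma contraction_bounds : noise_rate < contraction < 1.
Proof. pose proof noise_rate_bounds. unfold contraction. lra. Qed.

Lemma lyap_weight_pos : 0 < lyap_weight.
Proof.
  pose proof noise_rate_bounds. pose proof contraction_bounds.
  unfold lyap_weight. apply Rdiv_lt_0_compat; nra.
Qed.

Lemma lyap_weight_eq : 4 / delta = contraction * lyap_weight.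
Proof.
  pose proof noise_rate_bounds. pose proof contraction_bounds.
  unfold lyap_weight. field. lra.
Qed.

Lemma amp_tol_pos : 0 < amp_tol.
Proof.
  pose proof contraction_bounds. pose proof lyap_weight_pos.
  unfold amp_tol. apply Rdiv_lt_0_compat; lra.
Qed.

Lemma r_small_pos : 0 < r_small.
Proof.
  pose proof amp_tol_pos. unfold r_small. apply Rmin_glb_lt.
  - apply Rmin_glb_lt; lra.
  - assert (0 < Rmin amp_tol 1) by (apply Rmin_glb_lt; lra). simpl; nra.
Qed.

(* [log_gap r ^ 2 <= 12 r sqrt r] and [sqrt r <= amp_tol / 12]. *)
Lemma amp_near_one r : 0 < r <= r_small ->
  1 / 2 <= amp r <= 1 /\ (1 - amp r) ^ 2 <= amp_tol * r.
Proof.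
  intros Hr. pose proof amp_tol_pos.
  assert (Hr1 : r_small <= 1 / 4) by (unfold r_small; rewrite Rmin_l; apply Rmin_r).
  assert (Hr2 : r_small <= (Rmin amp_tol 1 / 12) ^ 2) by apply Rmin_r.
  destruct (amp_bounds r ltac:(lra)) as [Hf1 Hf2].
  destruct (log_gap_bound r ltac:(lra)) as [Hb0 Hb2].
  pose proof (sqrt_lt_R0 r ltac:(lra)).
  set (e := Rmin amp_tol 1) in *.
  assert (He : 0 < e <= 1 /\ e <= amp_tol).
  { unfold e. split; [split|]. apply Rmin_glb_lt; lra. apply Rmin_r. apply Rmin_l. }
  assert (Hsq : sqrt r <= e / 12).
  { rewrite <- (sqrt_pow2 (e / 12)) by lra. apply sqrt_le_1_alt. lra. }
  assert (HBe : log_gap r ^ 2 <= e * r).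
  { apply Rle_trans with (1 := Hb2).
    assert (12 * r * sqrt r <= 12 * r * (e / 12)) by (apply Rmult_le_compat_l; lra). lra. }
  assert (log_gap r <= 1 / 2) by (simpl in *; nra).
  split; [lra|]. simpl in *. nra.
Qed.

Lemma lyapunov_step m s : 1 / 2 <= m <= 1 -> 0 <= s <= r_small / 4 ->
  1 / 2 <= psi1_mod m s <= 1 /\ 0 <= 4 / delta * psi2_core m s /\
  4 / delta * psi2_core m s + lyap_weight * (1 - psi1_mod m s) ^ 2
    <= contraction * (s + lyap_weight * (1 - m) ^ 2).
Proof.
  intros Hm Hs.
  pose proof noise_rate_bounds. pose proof contraction_bounds.
  pose proof lyap_weight_pos. pose proof lyap_weight_eq as Hweight. pose proof amp_tol_pos.
  assert (Hd4 : 0 < 4 / delta) by (apply Rdiv_lt_0_compat; lra).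
  pose proof (psi2_core_nonneg m s ltac:(lra) ltac:(lra)).
  destruct (Req_dec s 0) as [->|Hs0].
  { rewrite psi1_mod_noiseless, psi2_core_noiseless by lra.
    pose proof (pow2_ge_0 (1 - m)).
    split; [lra|]. split; [nra|]. rewrite Hweight. nra. }
  assert (Hsp : 0 < s) by lra.
  assert (Hr : 0 < s / m ^ 2) by (apply Rdiv_lt_0_compat; nra).
  assert (Hr4 : s / m ^ 2 <= 4 * s).
  { unfold Rdiv. assert (/ m ^ 2 <= 4).
    { replace 4 with (/ (1 / 4)) by field. apply Rinv_le_contravar; simpl; nra. }
    nra. }
  pose proof (psi2_core_le_upper m s ltac:(lra) Hsp) as HDu.
  rewrite psi1_mod_amp by lra.
  set (r := s / m ^ 2) in *.
  destruct (amp_near_one r ltac:(lra)) as [Hf Hft].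
  assert (Hrate : 4 / delta * (1 / 2 + r / 8) <= noise_rate).
  { assert (r <= (delta - 2) / 2).
    { enough (r_small <= (delta - 2) / 2) by lra.
      unfold r_small. rewrite Rmin_l. apply Rmin_l. }
    unfold noise_rate. apply Rmult_le_reg_r with (4 * delta); [lra|].
    unfold Rdiv. field_simplify; lra. }
  assert (HcoreS : 4 / delta * psi2_core m s <=
                   4 / delta * (1 - m) ^ 2 + noise_rate * s).
  { assert (4 / delta * psi2_core m s <= 4 / delta * ((1 - m) ^ 2 + s * (1 / 2 + r / 8)))
      by (apply Rmult_le_compat_l; lra).
    assert (4 / delta * (1 / 2 + r / 8) * s <= noise_rate * s)
      by (apply Rmult_le_compat_r; lra).
    lra. }
  assert (HampS : lyap_weight * (1 - amp r) ^ 2 <= lyap_weight * (amp_tol * (4 * s))).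
  { apply Rmult_le_compat_l; [lra|].
    assert (amp_tol * r <= amp_tol * (4 * s)) by (apply Rmult_le_compat_l; lra). lra. }
  assert (Htol : lyap_weight * (amp_tol * (4 * s)) = (contraction - noise_rate) * s)
    by (unfold amp_tol; field; lra).
  split; [lra|]. split; [nra|]. nra.
Qed.

End Contraction.

Section StateEvolution.
Variables (delta : R) (a0 : Cpx) (s0 : R).

Definition alpha (t : nat) : Cpx := fst (se delta 0 a0 s0 t).
Definition sigma2 (t : nat) : R := snd (se delta 0 a0 s0 t).

Lemma alpha_succ t : alpha (S t) = psi1 (alpha t) (sigma2 t).
Proof. reflexivity. Qed.

Lemma sigma2_succ t : sigma2 (S t) = 4 / delta * psi2_core (Cmod (alpha t)) (sigma2 t).
Proof. apply psi2_noiseless. Qed.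

Hypothesis delta_pos : 0 < delta.
Hypothesis s0_nonneg : 0 <= s0.

Lemma sigma2_nonneg t : 0 <= sigma2 t.
Proof.
  induction t as [|t IH]; [exact s0_nonneg|]. rewrite sigma2_succ.
  apply Rmult_le_pos; [left; apply Rdiv_lt_0_compat; lra|].
  apply psi2_core_nonneg; auto using Cmod_nonneg.
Qed.

Lemma sigma2_succ_eq0 t : sigma2 (S t) = 0 -> Cmod (alpha t) = 1 /\ sigma2 t = 0.
Proof.
  intros H. rewrite sigma2_succ in H.
  apply psi2_core_eq0; auto using Cmod_nonneg, sigma2_nonneg.
  apply Rmult_integral in H. destruct H as [H|]; auto.
  assert (0 < 4 / delta) by (apply Rdiv_lt_0_compat; lra). lra.
Qed.

Lemma se_fixed_point_backward t :
  alpha t = (1, 0) -> sigma2 t = 0 -> a0 = (1, 0) /\ s0 = 0.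
Proof.
  induction t as [|t IH]; [auto|]. intros HA HS.
  destruct (sigma2_succ_eq0 t HS) as [Hm Hs]. apply IH; auto.
  rewrite alpha_succ, Hs, psi1_noiseless_unit in HA by auto. exact HA.
Qed.

Section Subcritical.
Hypothesis delta_lt_2 : delta < 2.
Hypothesis alpha_cv : Un_cv (fun t => Cmod (Csub (alpha t) (1, 0))) 0.
Hypothesis sigma2_cv : Un_cv sigma2 0.

(* [q] is chosen so that [4/delta * (1/2 - q) = 1] in [psi2_core_gt_lower]. *)
Lemma sigma2_eventually_nondecreasing :
  exists N, forall t, (t >= N)%nat -> sigma2 t <= sigma2 (S t).
Proof.
  set (q := (2 - delta) / 4).
  destruct (Un_cv_eventually_lt _ (q / 2) alpha_cv ltac:(unfold q; lra)) as [N1 HN1].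
  destruct (Un_cv_eventually_lt _ (q ^ 2 / 2) sigma2_cv ltac:(unfold q; nra)) as [N2 HN2].
  exists (max N1 N2). intros t Ht. rewrite sigma2_succ.
  destruct (Rle_lt_or_eq_dec _ _ (sigma2_nonneg t)) as [Hpos|<-].
  - assert (Hm : 1 - q / 2 < Cmod (alpha t)).
    { assert (Habs : Rabs (Cmod (alpha t) - 1) < q / 2)
        by (eapply Rle_lt_trans; [apply Cmod_sub_ge | exact (HN1 t ltac:(lia))]).
      apply Rabs_def2 in Habs. lra. }
    pose proof (psi2_core_gt_lower _ _ q ltac:(unfold q; lra) Hm
                  (conj Hpos (HN2 t ltac:(lia)))).
    replace (1 / 2 - q) with (delta / 4) in H by (unfold q; field).
    assert (4 / delta * psi2_core (Cmod (alpha t)) (sigma2 t) >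
            4 / delta * (delta / 4 * sigma2 t))
      by (apply Rmult_gt_compat_l; [apply Rdiv_lt_0_compat|]; lra).
    replace (4 / delta * (delta / 4 * sigma2 t)) with (sigma2 t) in H0 by (field; lra).
    lra.
  - apply Rmult_le_pos; [left; apply Rdiv_lt_0_compat; lra|].
    apply psi2_core_nonneg; auto using Cmod_nonneg; lra.
Qed.

(* Once the variance vanishes, [|alpha| = 1] and the iteration fixes [alpha]. *)
Lemma se_reaches_fixed_point : exists N, alpha N = (1, 0) /\ sigma2 N = 0.
Proof.
  destruct sigma2_eventually_nondecreasing as [N HN].
  assert (Hzero : forall t, (t >= N)%nat -> sigma2 t = 0).
  { intros t Ht. pose proof (Un_cv_0_nondecreasing_le0 _ N HN sigma2_cv t Ht).
    pose proof (sigma2_nonneg t). lra. }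
  assert (Hconst : forall k, alpha (N + k)%nat = alpha N).
  { induction k as [|k IH]; [rewrite Nat.add_0_r; auto|].
    rewrite Nat.add_succ_r, alpha_succ, (Hzero (N + k)%nat) by lia.
    destruct (sigma2_succ_eq0 (N + k) (Hzero (S (N + k)) ltac:(lia))) as [Hm _].
    rewrite psi1_noiseless_unit; auto. }
  exists N. split; [|apply Hzero; lia].
  assert (Hlim : Cmod (Csub (alpha N) (1, 0)) = 0).
  { apply (Un_cv_const_tail (fun t => Cmod (Csub (alpha t) (1, 0))) _ _ N); auto.
    intros n Hn.
    replace n with (N + (n - N))%nat by lia. rewrite Hconst. reflexivity. }
  apply Cmod_eq0 in Hlim. destruct (alpha N) as [x y].
  unfold Csub in Hlim; simpl in Hlim. injection Hlim; intros. f_equal; lra.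
Qed.

End Subcritical.

Section Supercritical.
Hypothesis delta_gt_2 : 2 < delta.
Variable x0 : R.
Hypothesis a0_real : a0 = (x0, 0).
Hypothesis x0_range : 1 / 2 <= x0 <= 1.
Let V0 := s0 + lyap_weight delta * (1 - x0) ^ 2.
Hypothesis V0_small : V0 <= r_small delta / 4.

Lemma lyapunov_invariant t : exists m, alpha t = (m, 0) /\ 1 / 2 <= m <= 1 /\
  0 <= sigma2 t /\ sigma2 t + lyap_weight delta * (1 - m) ^ 2 <= contraction delta ^ t * V0.
Proof.
  pose proof (lyap_weight_pos delta delta_gt_2).
  pose proof (contraction_bounds delta delta_gt_2).
  pose proof (noise_rate_bounds delta delta_gt_2).
  induction t as [|t IH].
  { exists x0. split; [exact a0_real|]. split; [exact x0_range|].
    split; [exact s0_nonneg|]. unfold V0, sigma2. simpl. lra. }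
  destruct IH as [m [HAm [Hm [HS HV]]]].
  assert (Hpow : contraction delta ^ t <= 1).
  { rewrite <- (pow1 t). apply pow_incr. lra. }
  assert (Hs : sigma2 t <= r_small delta / 4).
  { pose proof (pow2_ge_0 (1 - m)) as Hsq. pose proof (pow2_ge_0 (1 - x0)).
    assert (0 <= V0) by (unfold V0; nra).
    assert (contraction delta ^ t * V0 <= V0) by nra.
    assert (0 <= lyap_weight delta * (1 - m) ^ 2) by nra. lra. }
  destruct (lyapunov_step delta delta_gt_2 m (sigma2 t) Hm (conj HS Hs)) as [HP [HD HL]].
  exists (psi1_mod m (sigma2 t)). split; [|split; [auto|]].
  - rewrite alpha_succ, HAm, psi1_eq, Cmod_real, phase_real by lra.
    unfold Cscale; simpl. f_equal; ring.
  - rewrite sigma2_succ, HAm, Cmod_real by lra. split; [auto|].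
    simpl. nra.
Qed.

Lemma se_converges_supercritical :
  Un_cv (fun t => Cmod (Csub (alpha t) (1, 0))) 0 /\ Un_cv sigma2 0.
Proof.
  pose proof (lyap_weight_pos delta delta_gt_2).
  pose proof (contraction_bounds delta delta_gt_2).
  pose proof (noise_rate_bounds delta delta_gt_2).
  assert (HV0 : 0 <= V0) by (unfold V0; pose proof (pow2_ge_0 (1 - x0)); nra).
  assert (Hgeo : forall e, 0 < e -> exists N, forall n, (n >= N)%nat ->
                   contraction delta ^ n * V0 < e).
  { intros e He. destruct (geometric_eventually_lt (contraction delta) (V0 + 1) e)
      as [N HN]; try lra.
    exists N. intros n Hn. specialize (HN n Hn).
    assert (0 <= contraction delta ^ n) by (apply pow_le; lra). nra. }
  split.
  - intros e He. destruct (Hgeo (lyap_weight delta * e ^ 2)) as [N HN].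
    { apply Rmult_lt_0_compat; [lra | simpl; nra]. }
    exists N. intros n Hn. specialize (HN n Hn).
    destruct (lyapunov_invariant n) as [m [HAm [Hm [HS HV]]]].
    unfold R_dist. rewrite HAm, Cmod_sub_real, Rminus_0_r, Rabs_Rabsolu.
    assert ((1 - m) ^ 2 < e ^ 2).
    { apply Rmult_lt_reg_l with (lyap_weight delta); lra. }
    apply Rabs_def1; simpl in *; nra.
  - intros e He. destruct (Hgeo e He) as [N HN].
    exists N. intros n Hn. specialize (HN n Hn).
    destruct (lyapunov_invariant n) as [m [HAm [Hm [HS HV]]]].
    unfold R_dist. rewrite Rminus_0_r, Rabs_pos_eq by auto.
    pose proof (pow2_ge_0 (1 - m)). nra.
Qed.

End Supercritical.

End StateEvolution.

Lemma se_converges_near_fixed_point delta : 2 < delta ->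
  exists eps1 eps2 : R, 0 < eps1 /\ 0 < eps2 /\
    forall x s : R, 1 - eps1 < x < 1 -> 0 < s < eps2 ->
      Un_cv (fun t => Cmod (Csub (alpha delta (Cofreal x) s t) (1, 0))) 0 /\
      Un_cv (sigma2 delta (Cofreal x) s) 0.
Proof.
  intros Hd. pose proof (r_small_pos delta Hd). pose proof (lyap_weight_pos delta Hd).
  set (w := lyap_weight delta) in *. set (v := r_small delta / 8).
  assert (Hvw : 0 < v / w) by (apply Rdiv_lt_0_compat; unfold v; lra).
  pose proof (sqrt_lt_R0 _ Hvw). pose proof (sqrt_sqrt _ (Rlt_le _ _ Hvw)).
  exists (Rmin (1 / 2) (sqrt (v / w))), v.
  split; [apply Rmin_glb_lt; lra|]. split; [unfold v; lra|].
  intros x s Hx Hs.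
  pose proof (Rmin_l (1 / 2) (sqrt (v / w))). pose proof (Rmin_r (1 / 2) (sqrt (v / w))).
  assert (Hsq : (1 - x) ^ 2 < v / w) by (simpl; nra).
  assert (w * (1 - x) ^ 2 < v).
  { apply Rmult_lt_compat_l with (r := w) in Hsq; auto.
    replace (w * (v / w)) with v in Hsq by (field; lra). exact Hsq. }
  apply (se_converges_supercritical delta (Cofreal x) s ltac:(lra) Hd x eq_refl);
    fold w; unfold v in *; lra.
Qed.

Theorem mainTheorem2 :
  forall delta : R, 0 < delta ->
    (psi1 (1, 0) 0 = (1, 0) /\ psi2 (1, 0) 0 delta 0 = 0) /\
    (2 < delta ->
       exists eps1 eps2 : R, 0 < eps1 /\ 0 < eps2 /\
         forall a0 s0 : R, 1 - eps1 < a0 < 1 -> 0 < s0 < eps2 ->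
           Un_cv (fun t => Cmod (Csub (fst (se delta 0 (Cofreal a0) s0 t)) (1, 0))) 0 /\
           Un_cv (fun t => snd (se delta 0 (Cofreal a0) s0 t)) 0) /\
    (delta < 2 ->
       forall (a0 : Cpx) (s0 : R), 0 <= s0 -> (a0, s0) <> ((0, 0), 0) ->
         Un_cv (fun t => Cmod (Csub (fst (se delta 0 a0 s0 t)) (1, 0))) 0 ->
         Un_cv (fun t => snd (se delta 0 a0 s0 t)) 0 ->
         a0 = (1, 0) /\ s0 = 0).
Proof.
  intros delta Hd. split; [split|split].
  - apply psi1_noiseless_unit, Cmod_real. lra.
  - rewrite psi2_noiseless, Cmod_real, psi2_core_noiseless by lra. ring.
  - apply se_converges_near_fixed_point.
  - intros Hd2 a0 s0 Hs0 _ Halpha Hsigma.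
    destruct (se_reaches_fixed_point delta a0 s0 Hd Hs0 Hd2 Halpha Hsigma)
      as [N [HA HS]].
    exact (se_fixed_point_backward delta a0 s0 Hd Hs0 N HA HS).
Qed.
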